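(* Let $P=(I,J,K)$ be a reduced presentation, and let $\mathbf A_\Delta$, $\bar g$ and $\mathbf B_\Delta$ be as defined in the context. Then $\mathbf B_\Delta$ is isomorphic to the free one-generated algebra $\mathbf F_{\mathcal V(P)}(x)$ of the variety $\mathcal V(P)$.
   Context: Wajsberg hoops: basic hoops satisfying $(x\to y)\to y\approx(y\to x)\to x$. $\Gamma(\mathbf G,u)$ is the Wajsberg hoop on $[0,u]$ with $ab=\max\{a+b-u,0\}$, $a\to b=\min\{u-a+b,u\}$; $\mathbf{\L}_n=\Gamma(\mathbb Z,n)$ (elements $0,\dots,n$), $\mathbf{\L}_{n,k}=\Gamma(\mathbb Z\times_l\mathbb Z,(n,k))$ (elements are pairs $(r,s)$ with $(0,0)\le(r,s)\le(n,k)$ lexicographically), $\mathbf{\L}_n^\infty=\mathbf{\L}_{n,0}$, $\mathbf C_\omega$ the negative cone of $\mathbb Z$, i.e. the free monoid on one generator $c$ with $c^l\to c^m=c^{\max(l-m,0)}$. In a bounded Wajsberg hoop, $\neg a=a\to0$. $X{\downarrow}$ = set of divisors of elements of $X$. A presentation $P=(I,J,K)$ ($I,J$ finite subsets of $\mathbb N\setminus\{0\}$, $K\subseteq\{\omega\}$) is reduced if $I\cup J\cup K\ne\emptyset$, $J\ne\emptyset\Rightarrow K=\emptyset$, no $m\in I$ divides any element of $(I\setminus\{m\})\cup J$, and no $n\in J$ divides any element of $J\setminus\{n\}$. $\mathcal K_P=\{\mathbf{\L}_i:i\in I\}\cup\{\mathbf{\L}_j^\infty:j\in J\}$ if $K=\emptyset$,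 and $\{\mathbf{\L}_i:i\in I\}\cup\{\mathbf C_\omega\}$ if $K=\{\omega\}$; $\mathcal V(P)=\mathbf{HSP}(\mathcal K_P)$. Generators: for $k\ge2$ and $0\le h<k$ with $\gcd(k,h)=1$, $g_{k,h}$ denotes the unique element $a\in\mathbf{\L}_{k,h}$ with $a\le\neg a$ that generates $\mathbf{\L}_{k,h}$ (the generators of $\mathbf{\L}_{k,h}$ are exactly $g_{k,h}$ and $\neg g_{k,h}$); $g_{1,0}=(0,1)\in\mathbf{\L}_{1,0}$. Construction: $\Delta_I=\{(k,h,2):0\le h<k\in I{\downarrow},\gcd(k,h)=1\}$, $\Delta_J=\{(k,h,i):i\in\{0,1\},0\le h<k\in J{\downarrow},\gcd(k,h)=1\}$, $\Delta_K=\{(0,0,3)\}$ if $K=\{\omega\}$ and $\Delta_K=\emptyset$ otherwise; $\Delta=\Delta_I\cup\Delta_J\cup\Delta_K$. Put $\mathbf A^0_{k,h}=\mathbf A^1_{k,h}=\mathbf{\L}_{k,h}$, $\mathbf A^2_{k,h}=\mathbf{\L}_k$, $\mathbf A^3_{k,h}=\mathbf C_\omega$, and $\mathbf A_\Delta=\prod_{(k,h,i)\in\Delta}\mathbf A^i_{k,h}$. Define $\bar g\in A_\Delta$ by $\bar g(k,h,0)=g_{k,h}$, $\bar g(k,h,1)=\neg g_{k,h}$, $\bar g(k,h,2)=h\in\mathbf{\L}_k$, $\bar g(0,0,3)=c$. $\mathbf B_\Delta$ is the subalgebra of $\mathbf A_\Delta$ generated by $\bar g$. *)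

From mathcomp Require Import all_boot all_order all_algebra.
Set Implicit Arguments. Unset Strict Implicit. Unset Printing Implicit Defensive.
Import Order.TTheory GRing.Theory Num.Theory.

(* An algebra is given by an ambient carrier type, a membership predicate
   singling out its universe, and the operations (only their values on the
   universe matter). *)
Record halg := HAlg {
  hcar : Type;
  hmem : hcar -> Prop;
  hmul : hcar -> hcar -> hcar;
  himp : hcar -> hcar -> hcar;
  hone : hcar }.

Inductive term := Var | One | Mul of term & term | Imp of term & term.

Unset Implicit Arguments.
Fixpoint eval (A : halg) (x : hcar A) (t : term) : hcar A :=
  match t with
  | Var => x
  | One => @hone A
  | Mul t1 t2 => @hmul A (eval A x t1) (eval A x t2)
  | Imp t1 t2 => @himp A (eval A x t1) (eval A x t2)
  end.
Set Implicit Arguments.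

Definition generated (A : halg) (g b : hcar A) : Prop :=
  forall S : hcar A -> Prop,
    S (@hone A) ->
    (forall x y, S x -> S y -> S (@hmul A x y)) ->
    (forall x y, S x -> S y -> S (@himp A x y)) ->
    S g -> S b.

Definition holds (A : halg) (t s : term) : Prop :=
  forall a, @hmem A a -> eval A a t = eval A a s.

(* A subalgebra B (given as a subset of A) is isomorphic to the free
   one-generated algebra F_K(x) = T(x)/theta_K, theta_K being the congruence
   of identities valid in the class K: there is a homomorphism from the term
   algebra onto B whose kernel is theta_K. *)
Definition iso_to_free (theta : term -> term -> Prop) (A : halg)
    (B : hcar A -> Prop) : Prop :=
  exists phi : term -> hcar A,
    [/\ phi One = @hone A,
        (forall t s, phi (Mul t s) = @hmul A (phi t) (phi s)),
        (forall t s, phi (Imp t s) = @himp A (phi t) (phi s)),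
        ((forall t, B (phi t)) /\ (forall b, B b -> exists t, phi t = b))
      & (forall t s, phi t = phi s <-> theta t s)].

Local Open Scope ring_scope.

Definition zz := (int * int)%type.

Definition lexle (a b : zz) : bool :=
  (a.1 < b.1) || ((a.1 == b.1) && (a.2 <= b.2)).
Definition lexmax (a b : zz) : zz := if lexle a b then b else a.
Definition lexmin (a b : zz) : zz := if lexle a b then a else b.
Definition zadd (a b : zz) : zz := (a.1 + b.1, a.2 + b.2).
Definition zsub (a b : zz) : zz := (a.1 - b.1, a.2 - b.2).

(* Gamma(Z x_l Z, u) operations *)
Definition gam_mul (u a b : zz) : zz := lexmax (zsub (zadd a b) u) (0, 0).
Definition gam_imp (u a b : zz) : zz := lexmin (zadd (zsub u a) b) u.

Record zalg := ZAlg {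
  zmem : zz -> Prop;
  zmul : zz -> zz -> zz;
  zimp : zz -> zz -> zz;
  zone : zz }.

Definition toH (Z : zalg) : halg := HAlg (zmem Z) (zmul Z) (zimp Z) (zone Z).

(* L_n = Gamma(Z, n): element r in {0..n} is encoded as (r, 0) *)
Definition Luk (n : nat) : zalg :=
  ZAlg (fun a => a.2 = 0 /\ (0 <= a.1 <= n%:Z))
       (fun a b => (Num.max (a.1 + b.1 - n%:Z) 0, 0))
       (fun a b => (Num.min (n%:Z - a.1 + b.1) n%:Z, 0))
       (n%:Z, 0).

Definition LukP (n k : nat) : zalg :=
  let u : zz := (n%:Z, k%:Z) in
  ZAlg (fun a => lexle (0, 0) a && lexle a u)
       (gam_mul u) (gam_imp u) u.

Definition negP (n k : nat) (a : zz) : zz := gam_imp (n%:Z, k%:Z) a (0, 0).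

(* C_omega = negative cone of Z: element c^l is encoded as (-l, 0);
   a.b = a + b, a -> b = min(0, b - a) *)
Definition Cw : zalg :=
  ZAlg (fun a => a.1 <= 0 /\ a.2 = 0)
       (fun a b => (a.1 + b.1, 0))
       (fun a b => (Num.min 0 (b.1 - a.1), 0))
       (0, 0).

Definition cgen : zz := (-1, 0).

Local Close Scope ring_scope.

(* P = (I, J, K): I, J finite sets of positive naturals (given as lists),
   K : bool encodes K = {omega} (true) or K = emptyset (false). *)
Definition reduced (I J : seq nat) (K : bool) : Prop :=
  [/\ (forall m, m \in I -> 0 < m) /\ (forall m, m \in J -> 0 < m),
      (I != [::]) || (J != [::]) || K,
      (J != [::] -> K = false),
      (forall m x, m \in I -> x \in I -> x != m -> ~~ (m %| x)) /\
      (forall m x, m \in I -> x \in J -> ~~ (m %| x))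
    & (forall n x, n \in J -> x \in J -> x != n -> ~~ (n %| x))].

Definition thetaP (I J : seq nat) (K : bool) (t s : term) : Prop :=
  (forall i, i \in I -> holds (toH (Luk i)) t s) /\
  (if K then holds (toH Cw) t s
   else forall j, j \in J -> holds (toH (LukP j 0)) t s).

Definition divset (X : seq nat) (k : nat) : bool := has (fun m => k %| m) X.

Definition inDelta (I J : seq nat) (K : bool) (d : nat * nat * nat) : bool :=
  let: (k, h, i) := d in
  [&& i == 2, h < k, divset I k & coprime k h]
  || [&& (i == 0) || (i == 1), h < k, divset J k & coprime k h]
  || [&& K, k == 0, h == 0 & i == 3].

Definition DeltaT (I J : seq nat) (K : bool) := {d : nat * nat * nat | inDelta I J K d}.

Definition comp (d : nat * nat * nat) : zalg :=
  let: (k, h, i) := d in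
  match i with
  | O | S O => LukP k h
  | S (S O) => Luk k
  | _ => Cw
  end.

Definition ADelta (I J : seq nat) (K : bool) : halg :=
  @HAlg (DeltaT I J K -> zz)
    (fun f => forall d, zmem (comp (val d)) (f d))
    (fun f g d => zmul (comp (val d)) (f d) (g d))
    (fun f g d => zimp (comp (val d)) (f d) (g d))
    (fun d => zone (comp (val d))).

(* gsel k h plays the role of g_{k,h} *)
Definition gbar (gsel : nat -> nat -> zz) (d : nat * nat * nat) : zz :=
  let: (k, h, i) := d in
  match i with
  | O => gsel k h
  | S O => negP k h (gsel k h)
  | S (S O) => (Posz h, 0%R)
  | _ => cgen
  end.

Definition gbarD (I J : seq nat) (K : bool) (gsel : nat -> nat -> zz) :
  hcar (ADelta I J K) := fun d => gbar gsel (val d).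

Definition BDelta (I J : seq nat) (K : bool) (gsel : nat -> nat -> zz) :
  hcar (ADelta I J K) -> Prop :=
  @generated (ADelta I J K) (@gbarD I J K gsel).

Definition gen_spec (gsel : nat -> nat -> zz) : Prop :=
  gsel 1 0 = (0%R, 1%R) /\
  forall k h, 2 <= k -> h < k -> coprime k h ->
    [/\ zmem (LukP k h) (gsel k h),
        lexle (gsel k h) (negP k h (gsel k h))
      & forall b, zmem (LukP k h) b ->
          @generated (toH (LukP k h)) (gsel k h) b].

(* Evaluating terms at gbar is a homomorphism from the term algebra onto
   B_Delta, so the task is to identify its kernel: an identity holds at every
   coordinate of gbar iff it holds in every member of K_P.  All homomorphisms
   involved are induced by order-preserving maps (a, b) |-> (m a, p a + q b)
   of Z x_l Z.  For k | n, L_k embeds in L_n and L_{k,h} in L_n^infty, which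
   gives one direction.  Conversely, every element of L_n is the image of some
   h in L_k with h/k = r/n in lowest terms, every element of C_omega is an
   image of c, and every element (r, s) of L_n^infty with 0 < r < n is an image
   of g_{k,h} or of its negation: the elements of L_{k,h} whose determinant
   with the unit (k, h) is +-1 are exactly these two generators, and h can be
   chosen so that one of them has first coordinate r / gcd(n, r). *)

From mathcomp Require Import all_boot all_order all_algebra zify ring.
From Stdlib Require Import FunctionalExtensionality.
Set Implicit Arguments. Unset Strict Implicit. Unset Printing Implicit Defensive.
Import Order.TTheory GRing.Theory Num.Theory.
Local Open Scope ring_scope.

Definition holds_at (A : halg) (a : hcar A) (t s : term) : Prop :=
  eval A a t = eval A a s.
Arguments holds_at : clear implicits.

Lemma generated_evalP (A : halg) (g b : hcar A) :
  generated g b <-> exists t, eval A g t = b.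
Proof.
split=> [gen_b | [t <-] S S1 SM SI Sg].
- apply: (gen_b (fun b => exists t, eval A g t = b)).
  + by exists One.
  + by move=> _ _ [t1 <-] [t2 <-]; exists (Mul t1 t2).
  + by move=> _ _ [t1 <-] [t2 <-]; exists (Imp t1 t2).
  + by exists Var.
- by elim: t => //= t1 IH1 t2 IH2; [apply: SM | apply: SI].
Qed.

(* The operations are preserved on the whole ambient carrier, so no membership
   side conditions arise when transporting identities. *)
Definition zhom (Z1 Z2 : zalg) (f : zz -> zz) : Prop :=
  [/\ forall a b, f (zmul Z1 a b) = zmul Z2 (f a) (f b),
      forall a b, f (zimp Z1 a b) = zimp Z2 (f a) (f b)
    & f (zone Z1) = zone Z2].

Section ZHom.
Variables (Z1 Z2 : zalg) (f : zz -> zz).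
Hypothesis f_hom : zhom Z1 Z2 f.

Lemma zhom_eval a t : eval (toH Z2) (f a) t = f (eval (toH Z1) a t).
Proof.
case: f_hom => fM fI f1.
by elim: t => /= [||t1 -> t2 ->|t1 -> t2 ->]; rewrite ?fM ?fI ?f1.
Qed.

Lemma zhom_holds_at a t s :
  holds_at (toH Z1) a t s -> holds_at (toH Z2) (f a) t s.
Proof. by rewrite /holds_at !zhom_eval => ->. Qed.

Lemma zhom_holds_at_inj a t s : injective f ->
  holds_at (toH Z2) (f a) t s -> holds_at (toH Z1) a t s.
Proof. by move=> f_inj; rewrite /holds_at !zhom_eval => /f_inj. Qed.

End ZHom.

Lemma lexle_anti a b : lexle a b -> lexle b a -> a = b.
Proof.
case: a b => [a1 a2] [b1 b2]; rewrite /lexle /= => ab ba.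
by have [-> ->] : a1 = b1 /\ a2 = b2 by lia.
Qed.

Lemma lexle_total a b : lexle a b || lexle b a.
Proof. by case: a b => [a1 a2] [b1 b2]; rewrite /lexle /=; lia. Qed.

Section LexMonotone.
Variable f : zz -> zz.
Hypothesis f_mono : {homo f : a b / lexle a b}.

Lemma lexmax_homo a b : f (lexmax a b) = lexmax (f a) (f b).
Proof.
rewrite /lexmax; case: ifP => [ab | /negbT nab]; first by rewrite f_mono.
have ba : lexle b a by move: (lexle_total a b); rewrite (negbTE nab).
by case: ifP => // fab; apply: lexle_anti fab (f_mono ba).
Qed.

Lemma lexmin_homo a b : f (lexmin a b) = lexmin (f a) (f b).
Proof.
rewrite /lexmin; case: ifP => [ab | /negbT nab]; first by rewrite f_mono.
have ba : lexle b a by move: (lexle_total a b); rewrite (negbTE nab).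
by case: ifP => // fab; apply: lexle_anti (f_mono ba) fab.
Qed.

End LexMonotone.

(* For [0 < m] and [0 <= q] these are order-preserving endomorphisms of the
   group Z x_l Z, hence commute with the operations of every Gamma. *)
Definition lmap (m p q : int) (a : zz) : zz := (m * a.1, p * a.1 + q * a.2).

Section LinearMaps.
Variables (m p q : int).

Lemma lmap0 : lmap m p q (0, 0) = (0, 0).
Proof. by rewrite /lmap /= !mulr0 addr0. Qed.

Lemma lmap_zadd a b : lmap m p q (zadd a b) = zadd (lmap m p q a) (lmap m p q b).
Proof. by rewrite /lmap /zadd /=; congr pair; ring. Qed.

Lemma lmap_zsub a b : lmap m p q (zsub a b) = zsub (lmap m p q a) (lmap m p q b).
Proof. by rewrite /lmap /zsub /=; congr pair; ring. Qed.

Hypotheses (m_gt0 : 0 < m) (q_ge0 : 0 <= q).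

Lemma lmap_homo : {homo lmap m p q : a b / lexle a b}.
Proof.
move=> [a1 a2] [b1 b2]; rewrite /lexle /lmap /= => /orP [lt_ab | /andP [/eqP <- le_ab]].
- by rewrite ltr_pM2l ?lt_ab.
- by rewrite eqxx lerD2l ler_wpM2l ?orbT.
Qed.

Lemma lmap_gam_mul u a b :
  lmap m p q (gam_mul u a b) = gam_mul (lmap m p q u) (lmap m p q a) (lmap m p q b).
Proof. by rewrite /gam_mul (lexmax_homo lmap_homo) lmap_zsub lmap_zadd lmap0. Qed.

Lemma lmap_gam_imp u a b :
  lmap m p q (gam_imp u a b) = gam_imp (lmap m p q u) (lmap m p q a) (lmap m p q b).
Proof. by rewrite /gam_imp (lexmin_homo lmap_homo) lmap_zadd lmap_zsub. Qed.

End LinearMaps.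

Lemma lmap_inj m p q : 0 < m -> 0 < q -> injective (lmap m p q).
Proof.
move=> m_gt0 q_gt0 [a1 a2] [b1 b2] [/(mulfI (lt0r_neq0 m_gt0)) eq1].
by rewrite eq1 => /addrI /(mulfI (lt0r_neq0 q_gt0)) ->.
Qed.

Lemma LukP_lmap_zhom (k h j : nat) (m p q : int) : 0 < m -> 0 <= q ->
  lmap m p q (k%:Z, h%:Z) = (j%:Z, 0) -> zhom (LukP k h) (LukP j 0) (lmap m p q).
Proof.
move=> m_gt0 q_ge0 u_eq.
by split=> [a b|a b|] /=; rewrite ?lmap_gam_mul ?lmap_gam_imp ?u_eq.
Qed.

Lemma Luk_lmap_zhom (k n : nat) (m : int) : 0 <= m -> m * k%:Z = n%:Z ->
  zhom (Luk k) (Luk n) (lmap m 0 1).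
Proof.
move=> m_ge0 mk; rewrite /lmap.
split=> [a b|a b|] /=; rewrite !mul0r mul1r ?add0r -mk //.
- by rewrite maxr_pMr // mulr0; congr (Num.max _ _, _); ring.
- by rewrite minr_pMr //; congr (Num.min _ _, _); ring.
Qed.

Lemma Cw_lmap_zhom (l : int) : 0 <= l -> zhom Cw Cw (lmap l 0 1).
Proof.
move=> l_ge0; rewrite /lmap.
split=> [a b|a b|] /=; rewrite !mul0r mul1r ?add0r ?mulr0 //.
- by rewrite mulrDr.
- by rewrite minr_pMr // mulr0 mulrBr.
Qed.

Lemma Luk_eval_top (n : nat) t : eval (toH (Luk n)) (n%:Z, 0) t = (n%:Z, 0).
Proof. by elim: t => //= [t1 -> t2 ->|t1 -> t2 ->]; congr pair => /=; lia. Qed.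

Lemma lowest_terms (n r : nat) : (0 < n)%N -> (r < n)%N ->
  exists g k x : nat,
    [/\ (0 < g)%N, n = (k * g)%N, r = (x * g)%N, coprime k x & (x < k)%N].
Proof.
move=> n_gt0 lt_rn; set g := gcdn n r.
have g_gt0 : (0 < g)%N by rewrite gcdn_gt0 n_gt0.
have def_n : n = (n %/ g * g)%N by rewrite divnK ?dvdn_gcdl.
have def_r : r = (r %/ g * g)%N by rewrite divnK ?dvdn_gcdr.
exists g, (n %/ g)%N, (r %/ g)%N; split=> //.
  by rewrite /coprime -(eqn_pmul2r g_gt0) mul1n muln_gcdl -def_n -def_r.
by rewrite -(ltn_pmul2r g_gt0) -def_n -def_r.
Qed.

Lemma Luk_holdsP (n : nat) t s : (0 < n)%N ->
  holds (toH (Luk n)) t s <->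
  forall k, (k %| n)%N -> forall h, (h < k)%N -> coprime k h ->
    holds_at (toH (Luk k)) (h%:Z, 0) t s.
Proof.
move=> n_gt0; split=> [hold_n k /dvdnP [m def_n] h lt_hk _ | hold_div].
- have m_gt0 : 0 < m%:Z by move: n_gt0; rewrite def_n; nia.
  have mk : m%:Z * k%:Z = n%:Z by rewrite def_n PoszM.
  apply: (zhom_holds_at_inj (Luk_lmap_zhom (ltW m_gt0) mk) (lmap_inj m_gt0 ltr01)).
  by apply: hold_n; rewrite /= /lmap /= mulr0 mul0r addr0; split=> //; nia.
- move=> [a1 a2] [/= -> /andP [+ +]]; case: a1 => // r _ r_le_n.
  have [-> | lt_rn] : r = n \/ (r < n)%N by move: r_le_n; rewrite lez_nat; lia.
    by rewrite /holds_at !Luk_eval_top.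
  have [g [k [x [g_gt0 def_n def_r co_kx lt_xk]]]] := lowest_terms n_gt0 lt_rn.
  have gk : g%:Z * k%:Z = n%:Z by rewrite def_n PoszM mulrC.
  have -> : (r%:Z, 0) = lmap g%:Z 0 1 (x%:Z, 0).
    by rewrite /lmap /= def_r PoszM mulrC mul0r mulr0 addr0.
  apply: (zhom_holds_at (Luk_lmap_zhom _ gk)) => //.
  by apply: hold_div => //; rewrite def_n dvdn_mulr.
Qed.

Lemma Cw_holdsP t s : holds (toH Cw) t s <-> holds_at (toH Cw) cgen t s.
Proof.
split=> [hold | hold_c [a1 a2] /= [a1_le0 ->]]; first by apply: hold; rewrite /= /cgen.
have -> : (a1, 0) = lmap (- a1) 0 1 cgen by rewrite /lmap /cgen /=; congr pair; ring.
by apply: (zhom_holds_at (Cw_lmap_zhom _)) => //; rewrite oppr_ge0.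
Qed.

Definition cross (u a : zz) : int := a.1 * u.2 - a.2 * u.1.

Lemma negPE (k h : nat) b : zmem (LukP k h) b -> negP k h b = (k%:Z - b.1, h%:Z - b.2).
Proof.
case: b => b1 b2 /= /andP [b_ge0 b_le].
rewrite /negP /gam_imp /lexmin /zadd /zsub /lexle /= in b_ge0 b_le *.
by rewrite ifT; [congr pair; ring | lia].
Qed.

Lemma negP_mem (k h : nat) b : zmem (LukP k h) b -> zmem (LukP k h) (negP k h b).
Proof.
move=> b_mem; rewrite negPE //; case: b b_mem => b1 b2 /=.
move=> /andP [b_ge0 b_le]; rewrite /lexle /= in b_ge0 b_le *.
by apply/andP; split; lia.
Qed.

Lemma cross_negP (k h : nat) b : zmem (LukP k h) b ->
  cross (k%:Z, h%:Z) (negP k h b) = - cross (k%:Z, h%:Z) b.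
Proof. by move=> b_mem; rewrite negPE // /cross /=; ring. Qed.

Lemma gsel_mem gsel (k h : nat) : gen_spec gsel -> (h < k)%N -> coprime k h ->
  zmem (LukP k h) (gsel k h).
Proof.
case=> g10 gspec lt_hk co_kh; have [k_gt1 | k_le1] := ltnP 1 k.
  by case: (gspec k h k_gt1 lt_hk co_kh).
have [-> ->] : k = 1%N /\ h = 0%N by lia.
by rewrite g10.
Qed.

(* The integer combinations of g and the unit u form a subuniverse containing
   g, hence all of L_{k,h}; so (1,0) and (0,1) are combinations of g and u. *)
Lemma LukP_generator_cross (k h : nat) (g : zz) : (0 < k)%N ->
  (forall b, zmem (LukP k h) b -> @generated (toH (LukP k h)) g b) ->
  cross (k%:Z, h%:Z) g = 1 \/ cross (k%:Z, h%:Z) g = -1.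
Proof.
case: g => g1 g2 k_gt0 gen_g.
pose span (b : zz) := exists x y : int, b = (x * g1 + y * k%:Z, x * g2 + y * h%:Z).
have span_mem b : zmem (LukP k h) b -> span b.
  move=> /gen_g; apply => /=.
  - by exists 0, 1; congr pair; ring.
  - move=> _ _ [x1 [y1 ->]] [x2 [y2 ->]]; rewrite /gam_mul /lexmax; case: ifP => _.
      by exists 0, 0; congr pair; ring.
    by exists (x1 + x2), (y1 + y2 - 1); rewrite /zsub /zadd /=; congr pair; ring.
  - move=> _ _ [x1 [y1 ->]] [x2 [y2 ->]]; rewrite /gam_imp /lexmin; case: ifP => _.
      by exists (x2 - x1), (1 - y1 + y2); rewrite /zsub /zadd /=; congr pair; ring.
    by exists 0, 1; congr pair; ring.
  - by exists 1, 0; congr pair; ring.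
have [x1 [y1 [e11 e12]]] : span (1, 0) by apply: span_mem; rewrite /= /lexle /=; lia.
have [x2 [y2 [e21 e22]]] : span (0, 1) by apply: span_mem; rewrite /= /lexle /=; lia.
have det1 : (x1 * y2 - x2 * y1) * cross (k%:Z, h%:Z) (g1, g2) = 1.
  rewrite /cross /=; transitivity ((x1 * g1 + y1 * k%:Z) * (x2 * g2 + y2 * h%:Z)
    - (x1 * g2 + y1 * h%:Z) * (x2 * g1 + y2 * k%:Z)); first ring.
  by rewrite -e11 -e12 -e21 -e22; ring.
by have /orP [/eqP -> | /eqP ->] := intUnitRing.unitzPl det1; [left | right].
Qed.

Lemma cross_unit_interior (k h : nat) b : (1 < k)%N -> zmem (LukP k h) b ->
  cross (k%:Z, h%:Z) b = 1 \/ cross (k%:Z, h%:Z) b = -1 -> 0 < b.1 < k%:Z.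
Proof.
case: b => b1 b2 k_gt1 /andP [b_ge0 b_le]; rewrite /lexle /cross /= in b_ge0 b_le *.
have [-> | b1_gt0] : b1 = 0 \/ 0 < b1 by lia.
  by case: (ltrgtP b2 0) => ? []; nia.
have [-> | lt_b1k] : b1 = k \/ b1 < k by lia.
  by case: (ltrgtP b2 h%:Z) => ? []; nia.
by rewrite b1_gt0 lt_b1k.
Qed.

(* [u.1] divides [cross u a * (b.1 - a.1)], and [|b.1 - a.1| < u.1]. *)
Lemma cross_unit_uniq (u a b : zz) : cross u a = cross u b ->
  cross u a = 1 \/ cross u a = -1 -> 0 < a.1 < u.1 -> 0 < b.1 < u.1 -> a = b.
Proof.
case: u a b => [k h] [a1 a2] [b1 b2]; rewrite /cross /= => eq_ab e_unit.
move=> /andP [a1_gt0 a1_lt] /andP [b1_gt0 b1_lt].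
have key : k * (a1 * b2 - b1 * a2) = (a1 * h - a2 * k) * (b1 - a1).
  transitivity (b1 * (a1 * h - a2 * k) - a1 * (b1 * h - b2 * k)); first ring.
  by rewrite -eq_ab; ring.
have eq1 : a1 = b1.
  move: key; set w := a1 * b2 - b1 * a2.
  by case: (ltrgtP w 0) => w_sgn; case: e_unit => ->; nia.
rewrite -eq1 in eq_ab *; congr pair.
by move: eq_ab => /addrI /oppr_inj /(mulIf (lt0r_neq0 (lt_trans a1_gt0 a1_lt))).
Qed.

Lemma LukP_cross_unit_gen (k h : nat) (g b : zz) : (1 < k)%N ->
  zmem (LukP k h) g ->
  (forall c, zmem (LukP k h) c -> @generated (toH (LukP k h)) g c) ->
  zmem (LukP k h) b -> cross (k%:Z, h%:Z) b = 1 \/ cross (k%:Z, h%:Z) b = -1 ->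
  b = g \/ b = negP k h g.
Proof.
move=> k_gt1 g_mem gen_g b_mem b_unit; set u := (k%:Z, h%:Z) in b_unit *.
have g_unit : cross u g = 1 \/ cross u g = -1 := LukP_generator_cross (ltnW k_gt1) gen_g.
have ng_cross : cross u (negP k h g) = - cross u g := cross_negP g_mem.
have ng_unit : cross u (negP k h g) = 1 \/ cross u (negP k h g) = -1.
  by rewrite ng_cross; case: g_unit => ->; rewrite ?opprK; auto.
have b_in := cross_unit_interior k_gt1 b_mem b_unit.
have [eq_bg | eq_bng] : cross u b = cross u g \/ cross u b = cross u (negP k h g).
  by rewrite ng_cross; case: b_unit g_unit => -> [] ->; rewrite ?opprK; auto.
- left; apply: cross_unit_uniq eq_bg b_unit b_in _.
  exact: cross_unit_interior k_gt1 g_mem g_unit.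
- right; apply: cross_unit_uniq eq_bng b_unit b_in _.
  exact: cross_unit_interior k_gt1 (negP_mem g_mem) ng_unit.
Qed.

Lemma cross_unit_coprime (k h : nat) b :
  cross (k%:Z, h%:Z) b = 1 \/ cross (k%:Z, h%:Z) b = -1 -> coprime k h.
Proof.
move=> e_unit; apply/(coprimezP k%:Z h%:Z).
exists (- (cross (k%:Z, h%:Z) b * b.2), cross (k%:Z, h%:Z) b * b.1) => /=.
transitivity (cross (k%:Z, h%:Z) b * cross (k%:Z, h%:Z) b).
  by rewrite /cross /=; ring.
by case: e_unit => ->.
Qed.

Lemma exists_cross (k x : nat) (eps : int) : (0 < k)%N -> coprime k x ->
  exists h : nat, exists z : int, (h < k)%N /\ cross (k%:Z, h%:Z) (x%:Z, z) = eps.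
Proof.
move=> k_gt0; rewrite coprime_sym => /(coprimezP x%:Z k%:Z) [[u v] /= bezout].
have k_gt0' : 0 < k%:Z by [].
move: (divz_eq (eps * u) k) (modz_ge0 (eps * u) (lt0r_neq0 k_gt0'))
  (ltz_pmod (eps * u) k_gt0').
move: (_ %/ _)%Z (_ %% _)%Z => q r def_eu r_ge0 r_lt_k.
exists `|r|%N, (- (eps * v + x%:Z * q)); rewrite gez0_abs //; split; first lia.
rewrite /cross /=.
transitivity (eps * (u * x%:Z + v * k%:Z) + x%:Z * (q * k%:Z + r - eps * u)); first ring.
by rewrite -def_eu bezout; ring.
Qed.

(* [lmap (j %/ k) (- c * h) (c * k)] sends the unit (k, h) to (j, 0), so it
   induces a homomorphism from L_{k,h} to L_{j,0} when [0 <= c]. *)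
Definition gen_image gsel (j : nat) (a : zz) : Prop :=
  exists k h : nat, [/\ (h < k)%N, (k %| j)%N, coprime k h &
    exists c : int, 0 <= c /\
      exists2 b, b = gsel k h \/ b = negP k h (gsel k h) &
        a = lmap (j %/ k)%N%:Z (- c * h%:Z) (c * k%:Z) b].

Lemma gen_image_interior gsel (j r : nat) (s : int) : gen_spec gsel ->
  (0 < r < j)%N -> gen_image gsel j (r%:Z, s).
Proof.
move=> gspec /andP [r_gt0 lt_rj].
have j_gt0 := ltn_trans r_gt0 lt_rj.
have [g [k [x [g_gt0 def_j def_r co_kx lt_xk]]]] := lowest_terms j_gt0 lt_rj.
have x_gt0 : (0 < x)%N by move: r_gt0; rewrite def_r muln_gt0 => /andP [].
have k_gt1 : (1 < k)%N by apply: leq_ltn_trans lt_xk.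
pose eps : int := if s < 0 then 1 else -1.
have eps_unit : eps = 1 \/ eps = -1 by rewrite /eps; case: ifP; [left | right].
have [h [z [lt_hk cross_xz]]] := exists_cross eps (ltnW k_gt1) co_kx.
have co_kh : coprime k h by apply: cross_unit_coprime (x%:Z, z) _; rewrite cross_xz.
have [g_mem _ gen_g] := gspec.2 k h k_gt1 lt_hk co_kh.
have xz_mem : zmem (LukP k h) (x%:Z, z) by rewrite /= /lexle /=; apply/andP; split; lia.
exists k, h; split=> //; first by rewrite def_j dvdn_mulr.
exists (- eps * s); split; first by rewrite /eps; case: ifP; lia.
exists (x%:Z, z); first by apply: LukP_cross_unit_gen; rewrite ?cross_xz.
rewrite def_j mulKn ?(ltnW k_gt1) // /lmap /= def_r PoszM mulrC; congr pair.
symmetry; transitivity (eps * s * cross (k%:Z, h%:Z) (x%:Z, z)).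
  by rewrite /cross /=; ring.
by rewrite cross_xz; case: eps_unit => ->; ring.
Qed.

Lemma LukP_gen_image gsel (j : nat) a : (0 < j)%N -> gen_spec gsel ->
  zmem (LukP j 0) a -> gen_image gsel j a.
Proof.
case: a => r s j_gt0 gspec /andP [a_ge0 a_le]; rewrite /lexle /= in a_ge0 a_le.
have g10 := gspec.1.
have [r0 | r_gt0] : r = 0 \/ 0 < r by lia.
  exists 1%N, 0%N; split=> //; exists s; split; first lia; rewrite divn1.
  by exists (gsel 1 0); [left | rewrite g10 /lmap /= r0; congr pair; ring].
have [rj | lt_rj] : r = j%:Z \/ r < j%:Z by lia.
  exists 1%N, 0%N; split=> //; exists (- s); split; first lia; rewrite divn1.
  exists (negP 1 0 (gsel 1 0)); first by right.
  by rewrite g10 negPE // /lmap /= rj; congr pair; ring.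
have [rn def_r] : exists rn : nat, r = rn%:Z by exists `|r|%N; lia.
by rewrite def_r; apply: gen_image_interior gspec _; apply/andP; split; lia.
Qed.

Lemma LukP_holdsP gsel (j : nat) t s : (0 < j)%N -> gen_spec gsel ->
  holds (toH (LukP j 0)) t s <->
  forall k, (k %| j)%N -> forall h, (h < k)%N -> coprime k h ->
    holds_at (toH (LukP k h)) (gsel k h) t s /\
    holds_at (toH (LukP k h)) (negP k h (gsel k h)) t s.
Proof.
move=> j_gt0 gspec.
split=> [hold_j k /dvdnP [m def_j] h lt_hk co_kh | hold_gen a a_mem].
- have m_gt0 : 0 < m%:Z by move: j_gt0; rewrite def_j; nia.
  have k_gt0 : 0 < k%:Z by move: j_gt0; rewrite def_j; nia.
  have u_eq : lmap m%:Z (- h%:Z) k%:Z (k%:Z, h%:Z) = (j%:Z, 0).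
    by rewrite /lmap /= def_j PoszM; congr pair; ring.
  have emb_hom := LukP_lmap_zhom m_gt0 (ltW k_gt0) u_eq.
  have emb_holds b : zmem (LukP k h) b -> holds_at (toH (LukP k h)) b t s.
    move=> /andP [b_ge0 b_le].
    apply: (zhom_holds_at_inj emb_hom (lmap_inj m_gt0 k_gt0)).
    apply: hold_j; apply/andP; split.
      by rewrite -(lmap0 m%:Z (- h%:Z) k%:Z); apply: lmap_homo.
    by have := lmap_homo (- h%:Z) m_gt0 (ltW k_gt0) b_le; rewrite u_eq.
  have g_mem := gsel_mem gspec lt_hk co_kh.
  by split; apply: emb_holds; last apply: negP_mem.
- have [k [h [lt_hk dvd_kj co_kh [c [c_ge0 [b b_gen ->]]]]]] :=
    LukP_gen_image j_gt0 gspec a_mem.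
  have k_gt0 : (0 < k)%N by apply: leq_ltn_trans lt_hk.
  have jk_gt0 : 0 < (j %/ k)%N%:Z by rewrite ltz_nat divn_gt0 // dvdn_leq.
  have u_eq : lmap (j %/ k)%N%:Z (- c * h%:Z) (c * k%:Z) (k%:Z, h%:Z) = (j%:Z, 0).
    by rewrite /lmap /= -PoszM divnK //; congr pair; ring.
  apply: (zhom_holds_at (LukP_lmap_zhom jk_gt0 (mulr_ge0 c_ge0 _) u_eq)) => //.
  by have [] := hold_gen k dvd_kj h lt_hk co_kh; case: b_gen => ->.
Qed.

Lemma ADelta_eval I J K (f : hcar (ADelta I J K)) t d :
  eval (ADelta I J K) f t d = eval (toH (comp (val d))) (f d) t.
Proof. by elim: t => //= t1 -> t2 ->. Qed.

Lemma ADelta_eval_eqP I J K (F : nat * nat * nat -> zz) t s :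
  eval (ADelta I J K) (fun d => F (val d)) t =
    eval (ADelta I J K) (fun d => F (val d)) s <->
  forall d, inDelta I J K d -> holds_at (toH (comp d)) (F d) t s.
Proof.
split=> [eq_ts d d_in | hold_ts].
- by have := congr1 (fun f => f (exist _ d d_in)) eq_ts; rewrite /= !ADelta_eval.
- apply: functional_extensionality => d.
  by rewrite !ADelta_eval; apply: hold_ts (valP d).
Qed.

Lemma divset_forallP (X : seq nat) (P : nat -> Prop) :
  (forall m, m \in X -> forall k, (k %| m)%N -> P k) <-> (forall k, divset X k -> P k).
Proof.
split=> [hold k /hasP [m mX dvd_km] | hold m mX k dvd_km]; first exact: hold dvd_km.
by apply: hold; apply/hasP; exists m.
Qed.

Lemma thetaP_Delta I J K gsel t s : reduced I J K -> gen_spec gsel ->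
  thetaP I J K t s <->
  forall d, inDelta I J K d -> holds_at (toH (comp d)) (gbar gsel d) t s.
Proof.
move=> [[I_pos J_pos] _ J_K _ _] gspec.
have I_part : (forall i, i \in I -> holds (toH (Luk i)) t s) <->
    forall k, divset I k -> forall h, (h < k)%N -> coprime k h ->
      holds_at (toH (Luk k)) (h%:Z, 0) t s.
  split=> [hold_I | hold_div i iI].
    apply/divset_forallP => i iI.
    by apply/(Luk_holdsP _ _ (I_pos i iI)); apply: hold_I.
  by apply/(Luk_holdsP _ _ (I_pos i iI)); move: i iI; apply/divset_forallP.
have J_part : (forall j, j \in J -> holds (toH (LukP j 0)) t s) <->
    forall k, divset J k -> forall h, (h < k)%N -> coprime k h ->
      holds_at (toH (LukP k h)) (gsel k h) t s /\
      holds_at (toH (LukP k h)) (negP k h (gsel k h)) t s.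
  split=> [hold_J | hold_div j jJ].
    apply/divset_forallP => j jJ.
    by apply/(LukP_holdsP _ _ (J_pos j jJ) gspec); apply: hold_J.
  by apply/(LukP_holdsP _ _ (J_pos j jJ) gspec); move: j jJ; apply/divset_forallP.
rewrite /thetaP; split=> [[hold_I hold_K] [[k h] i] | hold_D].
- case/orP=> [/orP [/and4P [/eqP -> lt_hk divI co_kh] | ] | ].
  + exact: (iffLR I_part hold_I k divI h lt_hk co_kh).
  + case/and4P=> i01 lt_hk divJ co_kh.
    case: K J_K hold_K => [J_K _ | _ hold_J].
      by have /J_K : J != [::] by apply: contraTneq divJ => ->.
    have [hold_g hold_ng] := iffLR J_part hold_J k divJ h lt_hk co_kh.
    by case/orP: i01 => /eqP ->.
  + case/and4P=> K_true /eqP -> /eqP -> /eqP ->.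
    by rewrite K_true in hold_K; apply/Cw_holdsP.
- split.
    apply/I_part => k divI h lt_hk co_kh; apply: (hold_D (k, h, 2%N)).
    by rewrite /= lt_hk divI co_kh.
  case: K J_K hold_D => J_K hold_D.
    by apply/Cw_holdsP; apply: (hold_D (0, 0, 3)%N); rewrite /= ?orbT.
  apply/J_part => k divJ h lt_hk co_kh.
  by split; [apply: (hold_D (k, h, 0%N)) | apply: (hold_D (k, h, 1%N))];
    rewrite /= lt_hk divJ co_kh ?orbT.
Qed.

Theorem theorem3p6 (I J : seq nat) (K : bool) (gsel : nat -> nat -> int * int) :
  reduced I J K ->
  gen_spec gsel ->
  @iso_to_free (thetaP I J K) (ADelta I J K) (@BDelta I J K gsel).
Proof.
move=> redP gspec; exists (eval (ADelta I J K) (gbarD gsel)); split=> //.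
- by split=> [t | b /generated_evalP //]; apply/generated_evalP; exists t.
- move=> t s; apply: iff_trans (ADelta_eval_eqP I J K (gbar gsel) t s) _.
  exact: iff_sym (thetaP_Delta t s redP gspec).
Qed.
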